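(* Let $V$ be a finite dimensional real vector space, let $\mathscr C$ be a collection of cones in $V$ each containing $0$, and let $S$ be a closed convex subset of $V$. If $\mathcal C_S\subseteq\bigcup_{\Gamma\in\mathscr C}\mathcal C_\Gamma$, then $S=\bigcap_{\Gamma\in\mathscr C}(S+\Gamma)$.
   Context: A cone in $V$ is a subset closed under multiplication by positive reals. For $S\subseteq V$, the support function is $H_S:V^*\to\mathbb R\cup\{\pm\infty\}$, $H_S(\lambda)=\sup_{x\in S}\lambda(x)$, and $\mathcal C_S=\{\lambda\in V^*:H_S(\lambda)<\infty\}$. *)

From HB Require Import structures.
From mathcomp Require Import all_boot all_order all_algebra.
From mathcomp Require Import all_classical all_reals all_analysis.
Set Implicit Arguments. Unset Strict Implicit. Unset Printing Implicit Defensive.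
Import Order.TTheory GRing.Theory Num.Theory.
Import numFieldTopology.Exports numFieldNormedType.Exports.
Local Open Scope classical_set_scope.
Local Open Scope ring_scope.

(* V = 'rV[R]_n, a finite-dimensional real vector space;
   V^* = linear functionals V -> R, i.e. {linear 'rV[R]_n -> R^o}. *)

Definition is_cone (R : realType) (n : nat) (G : set 'rV[R]_n) : Prop :=
  forall (t : R) (x : 'rV[R]_n), 0 < t -> G x -> G (t *: x).

Definition support_fun (R : realType) (n : nat) (S : set 'rV[R]_n)
  (l : {linear 'rV[R]_n -> R^o}) : \bar R :=
  ereal_sup [set (l x)%:E | x in S].

(* C_S = { lambda in V^* | H_S(lambda) < +oo }. *)
Definition support_dom (R : realType) (n : nat) (S : set 'rV[R]_n)
  : set {linear 'rV[R]_n -> R^o} :=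
  [set l | (support_fun S l < +oo)%E].

Definition mink_sum (R : realType) (n : nat) (A B : set 'rV[R]_n) : set 'rV[R]_n :=
  [set x + y | x in A & y in B].

From HB Require Import structures.
From mathcomp Require Import all_boot all_order all_algebra.
From mathcomp Require Import all_classical all_reals all_analysis.
From mathcomp Require Import ring lra.
Import Order.TTheory GRing.Theory Num.Theory.
Import numFieldTopology.Exports numFieldNormedType.Exports.
Local Open Scope classical_set_scope.
Local Open Scope ring_scope.

(* A point x outside the closed convex set S is separated from S by the
   functional <x - p, .>, where p is the point of S nearest to x.  This
   functional is bounded above on S, so it lies in C_Gamma for some Gamma in
   the collection; on a cone containing 0 that forces it to be nonpositive.
   Writing x = s + g with s in S and g in Gamma then bounds <x - p, x> by
   <x - p, p> < <x - p, x>, a contradiction. *)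

Section EuclideanDot.
Context {R : realType} {n : nat}.
Implicit Types (d e x y : 'rV[R]_n).

Definition dot d y : R := \sum_i d 0 i * y 0 i.

Lemma dot_is_linear d : linear (dot d : 'rV[R]_n -> R^o).
Proof.
move=> a u v; rewrite /dot scaler_sumr -big_split /=; apply: eq_bigr => i _.
by rewrite !mxE /GRing.scale /=; ring.
Qed.

HB.instance Definition _ d :=
  GRing.isLinear.Build R 'rV[R]_n R^o *:%R (dot d) (dot_is_linear d).

Lemma dot_ge0 d : 0 <= dot d d.
Proof. by apply: sumr_ge0 => i _; rewrite -expr2 sqr_ge0. Qed.

Lemma dot_gt0 d : d != 0 -> 0 < dot d d.
Proof.
move=> d_neq0; rewrite lt_def dot_ge0 andbT; apply: contra d_neq0.
rewrite psumr_eq0 => [/allP d0|i _]; last by rewrite -expr2 sqr_ge0.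
apply/eqP/rowP => i; have := d0 i (mem_index_enum i).
by rewrite /= mulf_eq0 orbb mxE => /eqP.
Qed.

Lemma sqr_coord_le_dot d j : d 0 j ^+ 2 <= dot d d.
Proof.
rewrite /dot (bigD1 j) //= expr2 lerDl.
by apply: sumr_ge0 => i _; rewrite -expr2 sqr_ge0.
Qed.

Lemma dot_subZ d e (t : R) :
  dot (d - t *: e) (d - t *: e) = dot d d - 2 * t * dot d e + t ^+ 2 * dot e e.
Proof.
rewrite /dot !mulr_sumr -sumrB -big_split /=; apply: eq_bigr => i _.
by rewrite !mxE; ring.
Qed.

Lemma continuous_dot_sub x : continuous (fun y => dot (x - y) (x - y)).
Proof.
apply: (continuous_big add_continuous) => i _.
have coord_sub : continuous (fun y : 'rV[R]_n => (x - y) 0 i).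
  move=> y; under eq_fun do rewrite !mxE.
  by apply: continuousB; [exact: cst_continuous | exact: coord_continuous].
by move=> y; apply: continuousM; exact: coord_sub.
Qed.

Lemma bounded_dot_sublevel x (c : R) :
  bounded_set [set y | dot (x - y) (x - y) <= c].
Proof.
exists (\sum_i `|x 0 i| + c + 1); split; first exact: num_real.
move=> M ltM y /= yc; apply: le_trans (ltW ltM).
have c_ge0 : 0 <= c := le_trans (dot_ge0 (x - y)) yc.
rewrite [leLHS]mx_normrE; apply: bigmax_le => [|[k j] _ /=].
  by rewrite !addr_ge0 ?sumr_ge0.
rewrite (ord1 k).
have xj_le : `|x 0 j| <= \sum_i `|x 0 i|.
  by rewrite (bigD1 j) //= lerDl sumr_ge0.
have sqr_le : (x 0 j - y 0 j) ^+ 2 <= c.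
  by apply: le_trans yc; have := sqr_coord_le_dot (x - y) j; rewrite !mxE.
(* |t| <= t ^ 2 + 1 for every real t *)
have dist_le : `|x 0 j - y 0 j| <= c + 1.
  move: sqr_le; set t := x 0 j - y 0 j => sqr_le.
  by case: (lerP 0 t) => t0; [rewrite ger0_norm | rewrite ltr0_norm]; nra.
have -> : y 0 j = x 0 j - (x 0 j - y 0 j) by ring.
by apply: le_trans (ler_normB _ _) _; lra.
Qed.

Lemma exists_nearest_point (S : set 'rV[R]_n) x :
  closed S -> S !=set0 ->
  exists2 p, S p & forall s, S s -> dot (x - p) (x - p) <= dot (x - s) (x - s).
Proof.
move=> Scl [s0 Ss0].
pose g y := dot (x - y) (x - y).
pose A := S `&` [set y | g y <= g s0].
have A_compact : compact A.
  apply: bounded_closed_compact.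
    apply: sub_boundedr (bounded_dot_sublevel x (g s0)).
    by move=> P sublevelP y [_ /sublevelP].
  apply: closedI => //.
  exact: preimage_closed (fun y _ => continuous_dot_sub x y) (@closed_le R (g s0)).
have A_neq0 : A !=set0 by exists s0; split => /=.
have [p Ap pmin] := EVT_min_rV A_neq0 A_compact
  (continuous_subspaceT (continuous_dot_sub x)).
move: Ap; rewrite inE => -[Sp gp]; exists p => // s Ss.
have [gs|gs] := lerP (g s) (g s0); first by apply: pmin; rewrite inE.
exact: le_trans gp (ltW gs).
Qed.

Lemma dot_le0_of_min_segment d e :
  (forall t : R, 0 < t <= 1 -> dot d d <= dot (d - t *: e) (d - t *: e)) ->
  dot d e <= 0.
Proof.
move=> dmin; rewrite leNgt; apply/negP => de_gt0.
have ee_ge0 := dot_ge0 e.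
have sum_gt0 : 0 < dot d e + dot e e by lra.
(* t = <d,e> / (<d,e> + <e,e>) makes the segment strictly shorten d *)
pose t := dot d e / (dot d e + dot e e).
have t_gt0 : 0 < t by rewrite divr_gt0.
have t_le1 : t <= 1 by rewrite ler_pdivrMr // mul1r lerDl.
have tE : t * dot d e + t * dot e e = dot d e.
  by rewrite -mulrDr /t divfK // gt_eqF.
clearbody t.
have td_gt0 := mulr_gt0 t_gt0 de_gt0.
have ttd_gt0 : 0 < t ^+ 2 * dot d e by rewrite expr2 -mulrA mulr_gt0.
have tte : t ^+ 2 * dot e e = t * dot d e - t ^+ 2 * dot d e.
  by rewrite expr2 -!mulrA -mulrBr; congr (_ * _); lra.
have := dmin t; rewrite t_gt0 t_le1 dot_subZ -(mulrA 2) => /(_ isT).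
lra.
Qed.

Lemma convex_set_segment (S : set 'rV[R]_n) p s (t : R) :
  convex_set S -> S p -> S s -> 0 <= t <= 1 -> S (p + t *: (s - p)).
Proof.
move=> Scv Sp Ss /andP[t_ge0 t_le1].
have tP : Itv.num_sem `[0%Z, 1%Z] t.
  by apply/andP; split; [exact: num_real | rewrite in_itv /= t_ge0].
have := Scv s p (@Itv.mk _ _ (Itv.Real `[0%Z, 1%Z]) t tP).
rewrite !inE => /(_ Ss Sp); congr S.
by apply/rowP => k; rewrite !mxE /= /unstable.onem; ring.
Qed.

Lemma nearest_point_obtuse {S : set 'rV[R]_n} {x p} :
  convex_set S -> S p ->
  (forall s, S s -> dot (x - p) (x - p) <= dot (x - s) (x - s)) ->
  forall s, S s -> dot (x - p) (s - p) <= 0.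
Proof.
move=> Scv Sp pmin s Ss; apply: dot_le0_of_min_segment => t /andP[t_gt0 t_le1].
have -> : x - p - t *: (s - p) = x - (p + t *: (s - p)) by rewrite opprD addrA.
by apply: pmin; apply: convex_set_segment => //; rewrite ltW.
Qed.

Lemma separate_point_closed_convex {S : set 'rV[R]_n} {x} :
  closed S -> convex_set S -> ~ S x ->
  exists l : {linear 'rV[R]_n -> R^o},
    exists2 c, (forall s, S s -> l s <= c) & c < l x.
Proof.
move=> Scl Scv nSx.
have [S_neq0|S_empty] := pselect (S !=set0); last first.
  exists (dot 0), (dot 0 x - 1) => [s Ss|]; last lra.
  by case: S_empty; exists s.
have [p Sp pmin] := exists_nearest_point S x Scl S_neq0.
exists (dot (x - p)), (dot (x - p) p) => [s Ss|].
  by have := nearest_point_obtuse Scv Sp pmin s Ss; rewrite linearB subr_le0.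
have xp_neq0 : x - p != 0 by rewrite subr_eq0; apply: contraPneq nSx => ->.
by rewrite -subr_gt0 -linearB; exact: dot_gt0.
Qed.

End EuclideanDot.

Section SupportDomain.
Context {R : realType} {n : nat}.
Implicit Types (S G : set 'rV[R]_n) (l : {linear 'rV[R]_n -> R^o}).

Lemma support_dom_ub {S l} {c : R} :
  (forall s, S s -> l s <= c) -> support_dom S l.
Proof.
move=> lS; apply: (@le_lt_trans _ _ c%:E); last exact: ltry.
by apply: ge_ereal_sup => _ [s Ss <-]; rewrite lee_fin lS.
Qed.

Lemma support_dom_cone_le0 {G l z} :
  is_cone G -> G 0 -> support_dom G l -> G z -> l z <= 0.
Proof.
rewrite /support_dom /support_fun /=.
set H := ereal_sup _ => Gcone G0 H_lty Gz.
have l_le_H w : G w -> ((l w)%:E <= H)%E.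
  by move=> Gw; apply: ereal_sup_ubound; exists w.
have := l_le_H 0 G0; rewrite linear0.
case: H l_le_H H_lty => [r| |] l_le_H // _ _.
rewrite leNgt; apply/negP => lz_gt0.
(* scaling z pushes l above the finite supremum r *)
pose t := (`|r| + 1) / l z.
have t_gt0 : 0 < t by rewrite divr_gt0 // ltr_pwDr.
have := l_le_H _ (Gcone t z t_gt0 Gz).
rewrite linearZ_LR lee_fin /GRing.scale /= /t divfK ?gt_eqF //.
by have := ler_norm r; lra.
Qed.

End SupportDomain.

Theorem lemma2p24 (R : realType) (n : nat) (CC : set (set 'rV[R]_n))
  (S : set 'rV[R]_n) :
  (forall G, CC G -> is_cone G /\ G 0) ->
  closed S -> convex_set S ->
  support_dom S `<=` \bigcup_(G in CC) support_dom G ->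
  S = \bigcap_(G in CC) mink_sum S G.
Proof.
move=> coneCC Scl Scv S_sub; apply/seteqP; split.
  move=> x Sx G /coneCC[_ G0]; exists x => //.
  by exists 0 => //; rewrite addr0.
move=> x SGx; apply: contrapT => nSx.
have [l [c l_le_c c_lt_lx]] := separate_point_closed_convex Scl Scv nSx.
have [G CG lG] := S_sub l (support_dom_ub l_le_c).
have [Gcone G0] := coneCC G CG.
have [s Ss [g Gg sgx]] := SGx G CG.
have := support_dom_cone_le0 Gcone G0 lG Gg.
have := l_le_c s Ss.
by move: c_lt_lx; rewrite -sgx linearD; lra.
Qed.
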